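(* Let $G$ be a non-bipartite $\ell$-regular graph. Assume the edge-connectivity of $G$ is $\ell$, and that the only edge cuts consisting of $\ell$ edges are the sets of $\ell$ edges incident to a single vertex. Then for any vertex cut $S$ of $G$, $|S| > c(G\setminus S)$. In particular, $t(K(n,k))>1$ for any $n\ge 2k+1$.
   Context: A vertex cut of a connected graph $G$ is a set $S$ of vertices whose removal disconnects $G$; $c(G\setminus S)$ denotes the number of connected components after deleting $S$. The toughness is $t(G)=\min_S |S|/c(G\setminus S)$ over all vertex cuts $S$. The Kneser graph $K(n,k)$ has as vertices the $k$-element subsets of $[n]$, two vertices being adjacent iff they are disjoint. *)

(* Finite simple graphs as symmetric irreflexive relations. *)
From mathcomp Require Import all_boot all_order all_algebra.
Set Implicit Arguments. Unset Strict Implicit. Unset Printing Implicit Defensive.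
Import Order.TTheory GRing.Theory Num.Theory.

Section Graph.
Variables (T : finType) (e : rel T).

Definition nbhd (x : T) : {set T} := [set y | e x y].
Definition regular (l : nat) := forall x, #|nbhd x| = l.

Definition bipartite := exists f : T -> bool, forall x y, e x y -> f x != f y.

(* edges are represented as 2-element vertex sets {x,y} *)
Definition edge_boundary (X : {set T}) : {set {set T}} :=
  [set [set x; y] | x in X, y in ~: X & e x y].
Definition incident_edges (v : T) : {set {set T}} :=
  [set [set v; y] | y in nbhd v].

Definition edge_cut (F : {set {set T}}) :=
  exists X : {set T}, [/\ X != set0, X != setT & F = edge_boundary X].

Definition edge_connectivity_is (l : nat) :=
  (exists F, edge_cut F /\ #|F| = l) /\ (forall F, edge_cut F -> l <= #|F|).

Definition removed_rel (S : {set T}) : rel T :=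
  [rel x y | [&& e x y, x \notin S & y \notin S]].
Definition components (S : {set T}) : {set {set T}} :=
  [set [set y in ~: S | connect (removed_rel S) x y] | x in ~: S].
Definition ncomp (S : {set T}) : nat := #|components S|.

Definition vertex_cut (S : {set T}) := 2 <= ncomp S.

(* t(G) > r, where t(G) = min_S |S| / c(G\S) over vertex cuts S
   (t(G) = +infinity when there is no vertex cut) *)
Definition toughness_gt (r : rat) :=
  forall S, vertex_cut S -> (r < (#|S|%:R / (ncomp S)%:R))%R.

End Graph.

Definition kset (n k : nat) := {A : {set 'I_n} | #|A| == k}.
Definition kneser (n k : nat) : rel (kset n k) :=
  fun A B => [disjoint sval A & sval B].

(* Let S be a vertex cut of the l-regular graph G, and C_1, ..., C_c the components of G \ S.
   Every edge leaving C_i ends in S, so c l <= \sum_i |d(C_i)| <= e(S, V \ S) <= l |S|, where d(C)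
   is the set of edges leaving C. If c >= |S| all these inequalities are equalities: S is
   independent and each d(C_i) is a minimum edge cut. As V \ C_i contains a vertex of S and a
   vertex of another component, triviality of this cut forces C_i to be a single vertex. Then S
   and its complement 2-colour G.
   For K(n, k) with k >= 2 these hypotheses hold. The graph is vertex-transitive, connected and
   C(n-k, k)-regular. By posimodularity of the cut function, a smallest set realizing the minimum
   edge cut is a block of imprimitivity of the automorphism group, hence induces a regular
   subgraph, which forces its boundary to have size at least the degree (Mader). A refinement of
   this argument shows that a nontrivial cut of size C(n-k, k) would yield a clique of that size,
   while pairwise disjoint k-subsets of [n] number at most n/k. For k <= 1 the graph is complete
   and has no vertex cut. *)

From mathcomp Require Import all_boot all_order all_algebra perm zify.
Set Implicit Arguments. Unset Strict Implicit. Unset Printing Implicit Defensive.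
Import GRing.Theory Num.Theory.

Lemma sum_mem_card (I : finType) (A : {set I}) : \sum_(i : I) (i \in A : nat) = #|A|.
Proof. by rewrite -sum1_card [RHS]big_mkcond; apply: eq_bigr => i _; case: (i \in A). Qed.

Lemma sum_leq_eq (I : finType) (P : pred I) (F G : I -> nat) :
    (forall i, P i -> F i <= G i) -> \sum_(i | P i) G i <= \sum_(i | P i) F i ->
  forall i, P i -> F i = G i.
Proof.
move=> leFG geFG i Pi.
have := geq_leqif (leqif_sum (fun j Pj => leqif_eq (leFG j Pj))).
by rewrite geFG => /esym/forall_inP/(_ i Pi)/eqP.
Qed.

Lemma setD_neq0_eq_card (T : finType) (A B : {set T}) :
  #|A| = #|B| -> A != B -> A :\: B != set0.
Proof.
by move=> AB; apply: contra; rewrite setD_eq0 eqEcard AB leqnn andbT.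
Qed.

Lemma setD_neqT (T : finType) (A B : {set T}) : B != set0 -> A :\: B != setT.
Proof.
by case/set0Pn=> b bB; apply/negP => /eqP ABT; move: (in_setT b); rewrite -ABT !inE bB.
Qed.

Lemma ex_subset_card (I : finType) (A : {set I}) m :
  m <= #|A| -> exists2 B : {set I}, B \subset A & #|B| = m.
Proof.
move=> mA; have : 0 < #|[set B : {set I} | (B \subset A) && (#|B| == m)]|.
  by rewrite cards_draws bin_gt0.
by case/card_gt0P=> B; rewrite inE => /andP[BA /eqP Bm]; exists B.
Qed.

Lemma leq_bin m k : 0 < k -> k < m -> m <= 'C(m, k).
Proof.
elim: m k => [|m IHm] [|[|k]] // _ km; first by rewrite bin1.
rewrite binS; have [km1|] := ltnP k.+1 m; last lia.
have : 0 < 'C(m, k.+2) by rewrite bin_gt0.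
by have := IHm k.+1 isT km1; lia.
Qed.

Section CutSize.
Variables (T : finType) (e : rel T).
Implicit Types X Y A B C : {set T}.

Definition cut_size (X : {set T}) : nat :=
  \sum_(p : T * T) [&& e p.1 p.2, p.1 \in X & p.2 \notin X].

Definition edge_connected_ge (l : nat) :=
  forall X : {set T}, X != set0 -> X != setT -> l <= cut_size X.

Definition super_edge_connected (l : nat) :=
  forall X : {set T}, 1 < #|X| -> 1 < #|~: X| -> l < cut_size X.

Lemma cut_size_submod X Y :
  cut_size (X :&: Y) + cut_size (X :|: Y) <= cut_size X + cut_size Y.
Proof.
rewrite /cut_size -!big_split /=; apply: leq_sum => p _; rewrite !inE.
by case: (e _ _); case: (p.1 \in X); case: (p.1 \in Y); case: (p.2 \in X);
  case: (p.2 \in Y).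
Qed.

Lemma cut_size_sum X : cut_size X = \sum_(x in X) #|nbhd e x :\: X|.
Proof.
rewrite /cut_size -(pair_bigA _ (fun x y => [&& e x y, x \in X & y \notin X] : nat)).
rewrite [RHS]big_mkcond; apply: eq_bigr => x _ /=.
case: (boolP (x \in X)) => xX; last by apply: big1 => y _; rewrite andbF.
by rewrite -sum_mem_card; apply: eq_bigr => y _; rewrite !inE andbC.
Qed.

Lemma cut_size_gt0P X :
  reflect (exists x y, [/\ x \in X, y \notin X & e x y]) (0 < cut_size X).
Proof.
apply: (iffP idP) => [|[x [y [xX yX exy]]]].
  rewrite lt0n sum_nat_eq0 => /forallPn[[x y]]; rewrite eqb0 negbK /=.
  by case/and3P=> exy xX yX; exists x, y.
by rewrite /cut_size (bigD1 (x, y)) //= xX yX exy.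
Qed.

Lemma card_edge_boundary X : #|edge_boundary e X| = cut_size X.
Proof.
pose D := [set p : T * T | [&& e p.1 p.2, p.1 \in X & p.2 \notin X]].
have -> : cut_size X = #|D|.
  by rewrite -sum_mem_card; apply: eq_bigr => p _; rewrite inE.
have -> : edge_boundary e X = (fun p : T * T => [set p.1; p.2]) @: D.
  apply/setP => F; apply/imset2P/imsetP => [[x y xX]|[[x y]]].
    by rewrite !inE => /andP[yX exy] ->; exists (x, y); rewrite // inE /= xX yX exy.
  by rewrite inE /= => /and3P[exy xX yX] ->; exists x y; rewrite ?inE ?yX.
apply: card_in_imset => -[x y] [x' y']; rewrite !inE /= => /and3P[_ xX yX].
case/and3P=> _ xX' yX' E.
have : x \in [set x'; y'] by rewrite -E !inE eqxx.
have : y \in [set x'; y'] by rewrite -E !inE eqxx orbT.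
rewrite !inE => /orP[]/eqP yx' /orP[]/eqP xx'; subst x y => //.
all: by [rewrite xX' in yX | rewrite xX in yX' | rewrite xX in yX].
Qed.

Lemma regular_nonbipartite_gt0 d : regular e d -> ~ bipartite e -> 0 < d.
Proof.
move=> e_reg nonbip; rewrite lt0n; apply/eqP => d0; apply: nonbip.
exists (fun=> true) => x y exy; have /eqP := e_reg x.
by rewrite d0 cards_eq0 => /eqP/setP/(_ y); rewrite !inE exy.
Qed.

Lemma edge_connected_ge_connectivity l : edge_connectivity_is e l -> edge_connected_ge l.
Proof. by move=> [_ conn_l] X X0 XT; rewrite -card_edge_boundary; apply: conn_l; exists X. Qed.

Section Symmetric.
Hypothesis e_sym : symmetric e.

Lemma cut_sizeC X : cut_size (~: X) = cut_size X.
Proof.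
have swap_inj : injective (fun p : T * T => (p.2, p.1)) by move=> [? ?] [? ?] [-> ->].
rewrite /cut_size (reindex_inj swap_inj); apply: eq_bigr => p _ /=.
by rewrite e_sym !inE negbK; case: (p.1 \in X); case: (p.2 \in X); rewrite ?andbF.
Qed.

Lemma cut_size_posimod A B :
  cut_size (A :\: B) + cut_size (B :\: A) <= cut_size A + cut_size B.
Proof.
have := cut_size_submod A (~: B).
rewrite -(cut_sizeC (A :|: ~: B)) setCU setCK (cut_sizeC B) !setDE setIC.
by rewrite [~: A :&: B]setIC.
Qed.

Lemma sum_card_nbhdI A B :
  \sum_(x in A) #|nbhd e x :&: B| = \sum_(y in B) #|nbhd e y :&: A|.
Proof.
have card_nbhdI x C : #|nbhd e x :&: C| = \sum_(y in C) (e x y : nat).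
  rewrite big_mkcond -sum_mem_card; apply: eq_bigr => y _; rewrite !inE.
  by case: (e x y); case: (y \in C).
rewrite (eq_bigr _ (fun x _ => card_nbhdI x B)) exchange_big.
by apply: eq_bigr => y _; rewrite card_nbhdI; apply: eq_bigr => x _; rewrite e_sym.
Qed.

Lemma edge_boundaryC X : edge_boundary e (~: X) = edge_boundary e X.
Proof.
apply/setP => F; apply/imset2P/imset2P => -[x y]; rewrite !inE ?negbK => xX /andP[yX exy] ->.
  by exists y x; rewrite 1?setUC // !inE ?xX // e_sym.
by exists y x; rewrite 1?setUC // !inE ?negbK ?xX // e_sym.
Qed.

End Symmetric.
End CutSize.

Section Components.
Variables (T : finType) (e : rel T) (S : {set T}).
Hypothesis e_sym : symmetric e.
Local Notation P := (components e S).

Lemma removed_rel_sym : symmetric (removed_rel e S).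
Proof.
by move=> x y; rewrite /removed_rel /= e_sym; case: (x \in S); case: (y \in S); rewrite ?andbF.
Qed.

Lemma partition_components : partition P (~: S).
Proof.
apply: equivalence_partitionP => x y z _ _ _; split; first exact: connect0.
move=> cxy; apply/idP/idP; last exact: connect_trans.
by apply: connect_trans; rewrite (sym_connect_sym removed_rel_sym).
Qed.

Lemma components_exit C x y : C \in P -> x \in C -> y \notin C -> e x y -> y \in S.
Proof.
case/imsetP=> z _ ->; rewrite !inE => /andP[xS czx] + exy; apply: contraR => yS.
by rewrite yS /=; apply: connect_trans czx (connect1 _); rewrite /removed_rel /= exy xS.
Qed.

Lemma sum_cut_size_components :
  \sum_(C in P) cut_size e C <= \sum_(s in S) #|nbhd e s :\: S|.
Proof.
have cut_le C : C \in P -> cut_size e C <= \sum_(x in C) #|nbhd e x :&: S|.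
  move=> CP; rewrite cut_size_sum; apply: leq_sum => x xC; apply: subset_leq_card.
  by apply/subsetP => y; rewrite !inE => /andP[yC exy]; rewrite exy (components_exit CP xC).
apply: leq_trans (leq_sum _ cut_le) _.
rewrite -(set_partition_big _ partition_components) sum_card_nbhdI //.
by apply: eq_leq; apply: eq_bigr => s _; rewrite setDE.
Qed.

Lemma component_proper C : vertex_cut e S -> C \in P ->
  [/\ C != set0, C != setT & exists2 z, z \notin S & z \notin C].
Proof.
move=> /card_gt1P[C1 [C2 [C1P C2P C12]]] CP.
have C0 := partition_neq0 partition_components CP.
have [D DP DC] : exists2 D, D \in P & D != C.
  by case: (eqVneq C1 C) => [<-|]; [exists C2; rewrite // eq_sym | exists C1].
have /set0Pn[z zD] := partition_neq0 partition_components DP.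
have zS : z \notin S by have := subsetP (partitionS partition_components DP) z zD; rewrite inE.
have zC : z \notin C.
  by rewrite (disjointFr (trivIsetP (partition_trivIset partition_components) D C DP CP DC)).
split => //; last by exists z.
by apply: contraNneq zC => ->; rewrite inE.
Qed.

Lemma ncomp_le1_complete : (forall x y, x != y -> e x y) -> ncomp e S <= 1.
Proof.
move=> complete; apply/card_le1_eqP => _ _ /imsetP[x xS ->] /imsetP[y yS ->].
have cxy : connect (removed_rel e S) x y.
  have [->|xy] := eqVneq x y; first exact: connect0.
  by apply: connect1; move: xS yS; rewrite !inE /removed_rel /= complete // => -> ->.
apply/setP => z; rewrite !inE; apply: andb_id2l => _.
apply/idP/idP => [|cxz]; first exact: connect_trans cxy.
by apply: connect_trans cxz; rewrite (sym_connect_sym removed_rel_sym).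
Qed.

End Components.

Section ToughnessBound.
Variables (T : finType) (e : rel T) (d : nat) (S : {set T}).
Hypotheses (e_sym : symmetric e) (e_irr : irreflexive e) (e_reg : regular e d).
Hypotheses (conn_d : edge_connected_ge e d) (cutS : vertex_cut e S).
Local Notation P := (components e S).

Lemma card_nbhdD_le x : #|nbhd e x :\: S| <= d.
Proof. by rewrite -(e_reg x) subset_leq_card ?subsetDl. Qed.

Lemma cut_size_component_ge C : C \in P -> d <= cut_size e C.
Proof. by move=> CP; have [C0 CT _] := component_proper e_sym cutS CP; apply: conn_d. Qed.

Section FewComponents.
Hypothesis ncomp_ge : #|S| <= ncomp e S.

Lemma sum_d_components_le : \sum_(s in S) d <= \sum_(C in P) d.
Proof. by rewrite !sum_nat_const leq_mul2r ncomp_ge orbT. Qed.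

Lemma cut_size_component C : C \in P -> cut_size e C = d.
Proof.
move=> CP; apply/esym; move: C CP; apply: sum_leq_eq; first exact: cut_size_component_ge.
apply: leq_trans (sum_cut_size_components S e_sym) (leq_trans _ sum_d_components_le).
by apply: leq_sum => s _; apply: card_nbhdD_le.
Qed.

Lemma independent_cut s t : s \in S -> t \in S -> ~~ e s t.
Proof.
move=> sS tS.
have out_d : #|nbhd e s :\: S| = d.
  move: s sS; apply: sum_leq_eq => [s _|]; first exact: card_nbhdD_le.
  apply: leq_trans sum_d_components_le (leq_trans _ (sum_cut_size_components S e_sym)).
  by apply: leq_sum => C CP; rewrite cut_size_component.
have /eqP := cardsID S (nbhd e s); rewrite out_d e_reg -{2}[d]add0n eqn_add2r cards_eq0.
by move=> /eqP/setP/(_ t); rewrite !inE tS andbT => ->.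
Qed.

Lemma component_card_le1 C :
  0 < d -> super_edge_connected e d -> C \in P -> #|C| <= 1.
Proof.
move=> d_gt0 super CP; rewrite leqNgt; apply/negP => C_gt1.
have [_ _ [z zS zC]] := component_proper e_sym cutS CP.
have [x [y [xC yC exy]]] : exists x y, [/\ x \in C, y \notin C & e x y].
  by apply/cut_size_gt0P; rewrite cut_size_component.
have yS := components_exit CP xC yC exy.
have CC_gt1 : 1 < #|~: C|.
  apply/card_gt1P; exists y, z; rewrite !inE yC zC; split=> //.
  by apply: contraNneq zS => <-.
by have := super C C_gt1 CC_gt1; rewrite cut_size_component // ltnn.
Qed.

End FewComponents.

Theorem ncomp_lt_card : ~ bipartite e -> super_edge_connected e d -> ncomp e S < #|S|.
Proof.
move=> nonbip super; rewrite ltnNge; apply/negP => ncomp_ge.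
have d_gt0 := regular_nonbipartite_gt0 e_reg nonbip.
apply: nonbip; exists (mem S) => x y exy /=.
have [xS|xS] := boolP (x \in S); have [yS|yS] := boolP (y \in S) => //.
  by rewrite (negbTE (independent_cut ncomp_ge xS yS)) in exy.
have xP : x \in cover P by rewrite (cover_partition (partition_components S e_sym)) inE.
have CP := pblock_mem xP; have xC : x \in pblock P x by rewrite mem_pblock.
have [yC|yC] := boolP (y \in pblock P x); last by rewrite (components_exit CP xC yC exy) in yS.
have /card_le1_eqP/(_ x y xC yC) xy := component_card_le1 ncomp_ge d_gt0 super CP.
by rewrite xy e_irr in exy.
Qed.

End ToughnessBound.

Section TrivialMinimumCuts.
Variables (T : finType) (e : rel T) (l : nat).
Implicit Types X : {set T}.
Hypothesis e_sym : symmetric e.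

Lemma mem_edge_boundary X x y :
  x \in X -> y \notin X -> e x y -> [set x; y] \in edge_boundary e X.
Proof. by move=> xX yX exy; apply: imset2_f; rewrite // !inE yX. Qed.

Lemma cut_size_incident_boundary X v : v \in X ->
  edge_boundary e X = incident_edges e v -> cut_size e (X :\ v) = 0.
Proof.
move=> vX Ev; apply/eqP; rewrite -leqn0 leqNgt.
apply/cut_size_gt0P => -[x [y [xXv yXv exy]]]; move: xXv; rewrite !inE => /andP[xv xX].
have [yX|yX] := boolP (y \in X).
  have yv : y = v by move: yXv; rewrite !inE yX andbT negbK => /eqP.
  have : [set v; x] \in edge_boundary e X.
    by rewrite Ev; apply: imset_f; rewrite inE -yv e_sym.
  case/imset2P=> a b _; rewrite !inE => /andP[bX _] E.
  have : b \in [set v; x] by rewrite E !inE eqxx orbT.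
  by rewrite !inE => /orP[]/eqP bE; rewrite bE ?vX ?xX in bX.
have : [set x; y] \in incident_edges e v by rewrite -Ev mem_edge_boundary.
case/imsetP=> w _ E; have : v \in [set x; y] by rewrite E !inE eqxx.
by rewrite !inE => /orP[]/eqP vE; [rewrite vE eqxx in xv | rewrite -vE vX in yX].
Qed.

Lemma super_edge_connected_trivial_cuts : 0 < l -> edge_connected_ge e l ->
    (forall F, edge_cut e F -> #|F| = l -> exists v, F = incident_edges e v) ->
  super_edge_connected e l.
Proof.
move=> l_gt0 conn_l triv X X_gt1 CX_gt1.
have X0 : X != set0 by rewrite -card_gt0 ltnW.
have XT : X != setT by apply: contraTneq CX_gt1 => ->; rewrite setCT cards0.
rewrite ltn_neqAle conn_l // andbT; apply/eqP => l_cut.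
have [v Ev] : exists v, edge_boundary e X = incident_edges e v.
  by apply: triv; [exists X | rewrite card_edge_boundary].
wlog vX : X X_gt1 CX_gt1 {X0 XT} l_cut Ev / v \in X.
  move=> gen; have [vX|vX] := boolP (v \in X); first exact: gen vX.
  by apply: (gen (~: X)); rewrite ?setCK ?cut_sizeC ?edge_boundaryC ?inE.
have Xv0 : X :\ v != set0.
  by move: X_gt1; rewrite (cardsD1 v) vX -card_gt0 add1n ltnS.
have XvT : X :\ v != setT.
  by apply/negP => /eqP XvT; move: (in_setT v); rewrite -XvT !inE eqxx.
by have := conn_l _ Xv0 XvT; rewrite cut_size_incident_boundary // leqNgt l_gt0.
Qed.

End TrivialMinimumCuts.

Section VertexTransitive.
Variables (T : finType) (e : rel T) (d : nat).
Implicit Types A B X Y Z : {set T}.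
Hypotheses (e_sym : symmetric e) (e_irr : irreflexive e) (e_reg : regular e d).

Definition graph_aut (s : T -> T) := injective s /\ forall x y, e (s x) (s y) = e x y.

Definition clique A := {in A &, forall x y, x != y -> e x y}.

Lemma cut_size_aut s A : graph_aut s -> cut_size e (s @: A) = cut_size e A.
Proof.
move=> [s_inj s_e]; have s2_inj : injective (fun p : T * T => (s p.1, s p.2)).
  by move=> [? ?] [? ?] [/s_inj -> /s_inj ->].
by rewrite /cut_size (reindex_inj s2_inj) /=; apply: eq_bigr => p _; rewrite s_e !mem_imset.
Qed.

Lemma card_nbhdI_lt x A : x \in A -> #|nbhd e x :&: A| < #|A|.
Proof.
move=> xA; apply: proper_card; rewrite properE subsetIr /=.
by apply/subsetPn; exists x; rewrite // !inE e_irr.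
Qed.

Lemma card_nbhdD x A : #|nbhd e x :\: A| = d - #|nbhd e x :&: A|.
Proof. by rewrite -(e_reg x) -(cardsID A (nbhd e x)) addKn. Qed.

Lemma cut_size_ge A : #|A| * (d - #|A|.-1) <= cut_size e A.
Proof.
rewrite cut_size_sum -sum_nat_const; apply: leq_sum => x xA.
by rewrite card_nbhdD leq_sub2l // -ltnS (ltn_predK (card_nbhdI_lt xA)) card_nbhdI_lt.
Qed.

Hypothesis vtrans : forall x y, exists2 s, graph_aut s & s x = y.

Definition block A := forall s, graph_aut s -> s @: A :&: A != set0 -> s @: A = A.

Lemma block_cut_size A : A != set0 -> block A ->
  exists r, [/\ r < #|A|, {in A, forall x, #|nbhd e x :&: A| = r}
             & cut_size e A = #|A| * (d - r)].
Proof.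
case/set0Pn=> x0 x0A blockA.
have inner_le x y : x \in A -> y \in A -> #|nbhd e x :&: A| <= #|nbhd e y :&: A|.
  move=> xA yA; have [s s_aut sxy] := vtrans x y; have [s_inj s_e] := s_aut.
  have sA : s @: A = A.
    by apply: blockA s_aut _; apply/set0Pn; exists y; rewrite inE yA andbT -sxy imset_f.
  rewrite -(card_imset _ s_inj); apply/subset_leq_card/subsetP => _ /imsetP[z + ->].
  by rewrite !inE -sxy s_e => /andP[-> zA]; rewrite -sA imset_f.
have inner_eq x : x \in A -> #|nbhd e x :&: A| = #|nbhd e x0 :&: A|.
  by move=> xA; apply/eqP; rewrite eqn_leq !inner_le.
exists #|nbhd e x0 :&: A|; split; [exact: card_nbhdI_lt | exact: inner_eq |].
by rewrite cut_size_sum -sum_nat_const; apply: eq_bigr => x xA; rewrite card_nbhdD inner_eq.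
Qed.

(* If s A met A without being equal to it, A :\: s A would be smaller, with cut size at most c
   by posimodularity. *)
Lemma min_cut_atom_block c A : edge_connected_ge e c -> A != set0 ->
    cut_size e A <= c ->
    (forall Z, Z != set0 -> Z != setT -> cut_size e Z <= c -> #|A| <= #|Z|) ->
  block A.
Proof.
move=> conn_c A0 cutA Amin s s_aut meet; apply/eqP; apply: contraT => BnA.
set B := s @: A in meet BnA *.
have cardB : #|B| = #|A| by rewrite card_imset //; case: s_aut.
have B0 : B != set0 by apply: contraNneq meet => ->; rewrite set0I.
have AB0 : A :\: B != set0 by apply: setD_neq0_eq_card; rewrite // eq_sym.
have BA0 : B :\: A != set0 by apply: setD_neq0_eq_card.
have := Amin (A :\: B) AB0 (setD_neqT _ B0).
have := conn_c _ BA0 (setD_neqT _ A0); have := cut_size_posimod e_sym A B.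
have := cardsID B A; move: meet; rewrite -card_gt0 setIC cut_size_aut //; lia.
Qed.

(* Here the smaller witness is A :\: s A when it has two elements, and otherwise A :&: s A,
   whose cut size is bounded by submodularity. *)
Lemma min_super_cut_block A : 2 < #|A| -> 1 < #|~: A| -> cut_size e A = d ->
    edge_connected_ge e d ->
    (forall Z, 1 < #|Z| -> 1 < #|~: Z| -> cut_size e Z <= d -> #|A| <= #|Z|) ->
  block A.
Proof.
move=> A_gt2 CA_gt1 cutA conn_d Amin s s_aut meet; apply/eqP; apply: contraT => BnA.
set B := s @: A in meet BnA *.
have cardB : #|B| = #|A| by rewrite card_imset //; case: s_aut.
have cutB : cut_size e B = d by rewrite cut_size_aut.
have A0 : A != set0 by rewrite -card_gt0 ltnW // ltnW.
have AB0 : A :\: B != set0 by apply: setD_neq0_eq_card; rewrite // eq_sym.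
have BA0 : B :\: A != set0 by apply: setD_neq0_eq_card.
have CsubA (Z : {set T}) : Z \subset A -> 1 < #|~: Z|.
  by move=> ZA; apply: leq_trans CA_gt1 _; apply/subset_leq_card; rewrite setCS.
have cardAB := cardsID B A; move: meet AB0; rewrite setIC -!card_gt0 => meet AB_gt0.
have [AB_gt1|AB_le1] := ltnP 1 #|A :\: B|.
  have := Amin (A :\: B) AB_gt1 (CsubA _ (subsetDl _ _)).
  have := conn_d _ BA0 (setD_neqT _ A0); have := cut_size_posimod e_sym A B; lia.
have U0 : A :|: B != set0 by rewrite setU_eq0 negb_and A0.
have UT : A :|: B != setT.
  by apply/negP => /eqP UT; have := cardsU A B; rewrite UT cardsT -(cardsC A); lia.
have AiB_gt1 : 1 < #|A :&: B| by lia.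
have := Amin (A :&: B) AiB_gt1 (CsubA _ (subsetIl _ _)).
have := conn_d _ U0 UT; have := cut_size_submod e A B; lia.
Qed.

Hypothesis e_conn : edge_connected_ge e 1.

Lemma edge_connected_regular : edge_connected_ge e d.
Proof.
move=> X X0 XT.
pose nontriv (Z : {set T}) := (Z != set0) && (Z != setT).
have nontrivX : nontriv X by rewrite /nontriv X0 XT.
case: (@arg_minnP _ X nontriv (cut_size e) nontrivX) => Y /andP[Y0 YT] Ymin.
have conn_Y : edge_connected_ge e (cut_size e Y).
  by move=> Z Z0 ZT; apply: Ymin; rewrite /nontriv Z0 ZT.
pose small (Z : {set T}) := [&& Z != set0, Z != setT & cut_size e Z <= cut_size e Y].
have smallY : small Y by rewrite /small Y0 YT /=.
case: (@arg_minnP _ Y small (fun Z => #|Z|) smallY) => A /and3P[A0 AT cutA] Amin.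
have blockA : block A.
  apply: min_cut_atom_block conn_Y A0 cutA _ => Z Z0 ZT cutZ.
  by apply: Amin; rewrite /small Z0 ZT.
have [r [rA _ cutAr]] := block_cut_size A0 blockA.
have := e_conn A0 AT; have := Ymin X nontrivX; rewrite cutAr in cutA *; nia.
Qed.

Lemma super_edge_connected_regular :
  2 < d -> (forall A, #|A| = d -> ~ clique A) -> super_edge_connected e d.
Proof.
move=> d_gt2 no_clique X X_gt1 CX_gt1; rewrite ltnNge; apply/negP => cutX.
pose small (Z : {set T}) := [&& 1 < #|Z|, 1 < #|~: Z| & cut_size e Z <= d].
have smallX : small X by rewrite /small X_gt1 CX_gt1.
case: (@arg_minnP _ X small (fun Z => #|Z|) smallX) => A /and3P[A_gt1 CA_gt1 cutA] Amin.
have A0 : A != set0 by rewrite -card_gt0 ltnW.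
have AT : A != setT by apply: contraTneq CA_gt1 => ->; rewrite setCT cards0.
have conn_d := edge_connected_regular.
have cutAd : cut_size e A = d by apply/eqP; rewrite eqn_leq cutA conn_d.
have A_gt2 : 2 < #|A|.
  rewrite ltn_neqAle A_gt1 andbT; apply/eqP => A2.
  by have := cut_size_ge A; rewrite -A2 cutAd; lia.
have blockA : block A.
  apply: min_super_cut_block => // Z Z_gt1 CZ_gt1 cutZ.
  by apply: Amin; rewrite /small Z_gt1 CZ_gt1.
have [r [rA inner cutAr]] := block_cut_size A0 blockA.
(* |A| (d - r) = d with r < |A| forces |A| = d and r = d - 1: A is a clique. *)
have [Ad rd] : #|A| = d /\ r = d.-1 by rewrite cutAd in cutAr; nia.
apply: (no_clique A Ad) => x y xA yA xy.
have : nbhd e x :&: A = A :\ x.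
  apply/eqP; rewrite eqEcard; apply/andP; split.
    apply/subsetP => w; rewrite !inE => /andP[exw ->]; rewrite andbT.
    by apply: contraTneq exw => ->; rewrite e_irr.
  by rewrite inner //; have := cardsD1 x A; rewrite xA; lia.
by move/setP/(_ y); rewrite !inE yA eq_sym xy !andbT => ->.
Qed.

End VertexTransitive.

Section Kneser.
Variables n k : nat.
Local Notation V := (kset n k).
Local Notation e := (@kneser n k).
Implicit Types x y z : V.

Lemma card_kset x : #|val x| = k.
Proof. by case: x => A /= /eqP. Qed.

Lemma kneser_sym : symmetric e.
Proof. by move=> x y; rewrite /kneser disjoint_sym. Qed.

Lemma kneser_irr : 0 < k -> irreflexive e.
Proof.
move=> k_gt0 x; apply/negP => dis.
have /card_gt0P[i ix] : 0 < #|val x| by rewrite card_kset.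
by have := disjointFr dis ix; rewrite ix.
Qed.

Lemma card_ksetD_sym x y : #|val x :\: val y| = #|val y :\: val x|.
Proof.
have := cardsID (val y) (val x); have := cardsID (val x) (val y).
by rewrite !card_kset setIC; lia.
Qed.

Lemma kset_eqP x y : reflect (x = y) (#|val x :\: val y| == 0).
Proof.
apply: (iffP idP) => [|->]; last by rewrite setDv cards0.
rewrite cards_eq0 setD_eq0 => xy; apply: val_inj; apply/eqP.
by rewrite eqEcard xy !card_kset leqnn.
Qed.

Lemma kset_swap_ind (X : {set V}) x0 : x0 \in X ->
    (forall x y, #|val x :\: val y| = 1 -> x \in X -> y \in X) ->
  forall y, y \in X.
Proof.
move=> x0X swapX y; move: {2}#|_| (erefl #|val x0 :\: val y|) => m.
elim: m x0 x0X => [|m IHm] x xX xy; first by move/eqP/kset_eqP: xy => <-.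
have /card_gt0P[a] : 0 < #|val x :\: val y| by rewrite xy.
have /card_gt0P[b] : 0 < #|val y :\: val x| by rewrite -card_ksetD_sym xy.
rewrite !inE => /andP[bx by_] /andP[ay ax].
have zk : #|b |: (val x :\ a)| == k.
  rewrite cardsU1 !inE (negbTE bx) andbF /=.
  by have := cardsD1 a (val x); rewrite ax card_kset /=; lia.
pose z : V := exist _ (b |: (val x :\ a)) zk.
have xz : #|val x :\: val z| = 1.
  rewrite (_ : val x :\: val z = [set a]) ?cards1 //; apply/setP => i; rewrite !inE.
  case: (eqVneq i a) => [->|_]; first by rewrite (negbTE (memPn bx a ax)) ax.
  by case: (i \in val x); rewrite ?orbT ?andbF.
apply: (IHm z (swapX x z xz xX)).
rewrite (_ : val z :\: val y = (val x :\: val y) :\ a).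
  by move: xy; rewrite (cardsD1 a) !inE ay ax; lia.
apply/setP => i; rewrite !inE; case: (eqVneq i b) => [->|_] /=; first by rewrite by_ andbF.
by case: (i \in val y); rewrite /= ?andbF.
Qed.

Definition kset_perm (p : {perm 'I_n}) x : V :=
  exist _ (p @: val x) (introT eqP (etrans (card_imset _ (@perm_inj _ p)) (card_kset x))).

Lemma kset_perm_aut p : graph_aut e (kset_perm p).
Proof.
split=> [x y /(congr1 val) /= /(imset_inj (@perm_inj _ p))|x y]; first exact: val_inj.
by rewrite /kneser /= imset_disjoint //; apply: perm_inj.
Qed.

Lemma kset_permM p q x : kset_perm (p * q) x = kset_perm q (kset_perm p x).
Proof. by apply: val_inj; rewrite /= -imset_comp; apply: eq_imset => i; rewrite permM. Qed.

Lemma kset_perm1 x : kset_perm 1 x = x.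
Proof. by apply: val_inj; rewrite /= imset_perm1. Qed.

Lemma kset_perm_swap x y : #|val x :\: val y| = 1 -> exists p, kset_perm p x = y.
Proof.
move=> /eqP/cards1P[a xy]; have /card_gt0P[b] : 0 < #|val y :\: val x|.
  by rewrite -card_ksetD_sym xy cards1.
rewrite inE => /andP[bx by_]; have : a \in val x :\: val y by rewrite xy inE.
rewrite inE => /andP[ay ax].
exists (tperm a b); apply: val_inj; apply/eqP; rewrite /= eqEcard.
rewrite card_imset ?card_kset ?leqnn ?andbT; last exact: perm_inj.
apply/subsetP => _ /imsetP[i ix ->]; have [->|ia] := eqVneq i a; first by rewrite tpermL.
rewrite tpermD 1?eq_sym //; last by apply: contraNneq bx => <-.
by apply: contraR ia => iy; rewrite -in_set1 -xy inE iy ix.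
Qed.

Lemma kneser_vtrans x y : exists2 s, graph_aut e s & s x = y.
Proof.
pose X := [set z | [exists p, kset_perm p x == z]].
have : y \in X.
  apply: (kset_swap_ind (x0 := x)) => [|z w zw].
    by rewrite inE; apply/existsP; exists 1%g; rewrite kset_perm1.
  rewrite !inE => /existsP[p /eqP pz]; have [q qw] := kset_perm_swap zw.
  by apply/existsP; exists (p * q)%g; rewrite kset_permM pz qw.
by rewrite inE => /existsP[p /eqP pxy]; exists (kset_perm p); first exact: kset_perm_aut.
Qed.

Lemma exists_kset_disjoint (A : {set 'I_n}) :
  #|A| + k <= n -> exists y : V, [disjoint A & val y].
Proof.
move=> Ak; have [B BC] : exists2 B : {set 'I_n}, B \subset ~: A & #|B| = k.
  by apply: (@ex_subset_card _ (~: A)); have := cardsC A; rewrite card_ord; lia.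
by move/eqP=> Bk; exists (exist _ B Bk); rewrite disjoint_sym disjoints_subset.
Qed.

Lemma kneser_regular : regular e 'C(n - k, k).
Proof.
move=> x.
have -> : #|nbhd e x| = #|[set B : {set 'I_n} | (B \subset ~: val x) && (#|B| == k)]|.
  rewrite -(card_imset _ val_inj); apply: eq_card => B; rewrite !inE.
  apply/imsetP/andP => [[y]|[BC Bk]].
    rewrite inE /kneser disjoint_sym disjoints_subset => ? ->.
    by split; last exact/eqP/card_kset.
  by exists (exist _ B Bk); rewrite // inE /kneser /= disjoint_sym disjoints_subset.
rewrite cards_draws; have := cardsC (val x); rewrite card_ord card_kset => ?.
by congr 'C(_, _); lia.
Qed.

Lemma kneser_complete : k <= 1 -> forall x y, x != y -> e x y.
Proof.
move=> k_le1 x y xy; rewrite /kneser -setI_eq0 -cards_eq0.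
have := cardsID (val y) (val x); have : #|val x :\: val y| != 0.
  by apply: contra xy => /kset_eqP ->.
by rewrite card_kset /=; lia.
Qed.

Lemma kneser_clique_card (A : {set V}) : clique e A -> #|A| * k <= n.
Proof.
move=> clA; have trivA : trivIset (val @: A).
  apply/trivIsetP => _ _ /imsetP[x xA ->] /imsetP[y yA ->] xy.
  by apply: clA => //; apply: contraNneq xy => ->.
have := eqTleqif (leq_card_cover (val @: A)) trivA.
rewrite big_imset /=; last by move=> x y _ _; apply: val_inj.
rewrite (eq_bigr (fun=> k)) ?sum_nat_const => [<-|x _]; last exact: card_kset.
by apply: leq_trans (max_card _) _; rewrite card_ord.
Qed.

Hypothesis n_ge : 2 * k + 1 <= n.

Lemma kset_swap_common_nbhd x y : #|val x :\: val y| = 1 -> exists z, e x z && e y z.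
Proof.
move=> xy; have [z xyz] : exists z : V, [disjoint val x :|: val y & val z].
  apply: exists_kset_disjoint; have := cardsU (val x) (val y).
  by have := cardsID (val y) (val x); rewrite !card_kset; lia.
by exists z; rewrite /kneser !(disjointWl _ xyz) ?subsetUl ?subsetUr.
Qed.

Lemma kneser_connected : edge_connected_ge e 1.
Proof.
move=> X /set0Pn[x0 x0X] XT; rewrite lt0n; apply: contraNN XT => /eqP cut0.
have closedX u w : u \in X -> e u w -> w \in X.
  move=> uX euw; apply: contraT => wX; suff : 0 < cut_size e X by rewrite cut0.
  by apply/cut_size_gt0P; exists u, w.
apply/eqP/setP => y; rewrite inE; apply: (kset_swap_ind x0X) => x z xz xX.
have [D /andP[exD ezD]] := kset_swap_common_nbhd xz.
by apply: closedX (closedX _ _ xX exD) _; rewrite kneser_sym.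
Qed.

Lemma kneser_nonbipartite : 0 < k -> ~ bipartite e.
Proof.
move=> k_gt0 [f f_prop].
have [x0 _] : exists x0 : V, [disjoint set0 & val x0].
  by apply: exists_kset_disjoint; rewrite cards0; lia.
have f_const y : f y = f x0.
  have : y \in [set z | f z == f x0].
    apply: (kset_swap_ind (x0 := x0)) => [|x z xz]; rewrite !inE // => /eqP fx.
    have [D /andP[exD ezD]] := kset_swap_common_nbhd xz.
    move: (f_prop _ _ exD) (f_prop _ _ ezD); rewrite -fx.
    by case: (f x); case: (f z); case: (f D).
  by rewrite inE => /eqP.
have [y x0y] : exists y, e x0 y by apply: exists_kset_disjoint; rewrite card_kset; lia.
by have := f_prop _ _ x0y; rewrite !f_const eqxx.
Qed.

End Kneser.

Lemma kneser_ncomp_lt_card n k (S : {set kset n k}) :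
  2 * k + 1 <= n -> vertex_cut (@kneser n k) S -> ncomp (@kneser n k) S < #|S|.
Proof.
move=> n_ge cutS; have [k_le1|k_gt1] := leqP k 1.
  have := ncomp_le1_complete S (@kneser_sym n k) (kneser_complete k_le1).
  by move: cutS; rewrite /vertex_cut ltnNge => /negbTE->.
have k_gt0 : 0 < k by lia.
have d_ge : n - k <= 'C(n - k, k) by apply: leq_bin; lia.
have e_irr := @kneser_irr n k k_gt0; have e_reg := @kneser_regular n k.
have e_sym := @kneser_sym n k; have vtrans := @kneser_vtrans n k.
apply: (ncomp_lt_card e_sym e_irr e_reg _ cutS (kneser_nonbipartite n_ge k_gt0)).
  exact: edge_connected_regular e_sym e_irr e_reg vtrans (kneser_connected n_ge).
apply: (super_edge_connected_regular e_sym e_irr e_reg vtrans (kneser_connected n_ge)).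
  by lia.
by move=> A cardA /kneser_clique_card; rewrite cardA; nia.
Qed.

Theorem lemma2p13 :
  (forall (T : finType) (e : rel T) (l : nat),
     symmetric e -> irreflexive e ->
     regular e l -> ~ bipartite e ->
     edge_connectivity_is e l ->
     (forall F, edge_cut e F -> #|F| = l -> exists v, F = incident_edges e v) ->
     forall S : {set T}, vertex_cut e S -> ncomp e S < #|S|)
  /\
  (forall n k : nat, 2 * k + 1 <= n -> toughness_gt (@kneser n k) 1%R).
Proof.
split=> [T e l e_sym e_irr e_reg nonbip /edge_connected_ge_connectivity conn triv S cutS|].
  have l_gt0 := regular_nonbipartite_gt0 e_reg nonbip.
  apply: (ncomp_lt_card e_sym e_irr e_reg conn cutS nonbip).
  exact: super_edge_connected_trivial_cuts.
move=> n k n_ge S cutS.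
have ncomp_gt0 : 0 < ncomp (@kneser n k) S by move: cutS; rewrite /vertex_cut; lia.
by rewrite ltr_pdivlMr ?ltr0n // mul1r ltr_nat kneser_ncomp_lt_card.
Qed.
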